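(* Let $n\ge 11$ and let $G$ be a connected tridegreed graph of order $n$ whose set of distinct vertex degrees is $\{d_1,d_2,d_3\}$ with $d_1<d_2<d_3=n-1$. Then there exists an integer $t$ lying between $\frac{3}{10}n$ and $\frac{4}{10}n$ such that $$cM_2(G)<cM_2(K_t+\overline{K}_{n-t}).$$
   Context: All graphs are finite and simple. For a graph $G$ and a vertex $u$, $d_u(G)$ denotes the degree of $u$ in $G$. The complementary second Zagreb index of $G$ is $cM_2(G)=\sum_{uv\in E(G)}\left|(d_u(G))^2-(d_v(G))^2\right|$. A graph is tridegreed if the set of distinct vertex degrees has exactly three elements. $K_m$ is the complete graph on $m$ vertices, $\overline{H}$ is the complement of $H$, and $H_1+H_2$ (the join) is the graph on the disjoint union $V(H_1)\cup V(H_2)$ with edge set $E(H_1)\cup E(H_2)\cup\{h_1h_2: h_1\in V(H_1),h_2\in V(H_2)\}$. *)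

From mathcomp Require Import all_boot.
Set Implicit Arguments. Unset Strict Implicit. Unset Printing Implicit Defensive.

Definition simple_graph (T : finType) (e : rel T) : Prop :=
  symmetric e /\ irreflexive e.

Definition deg (T : finType) (e : rel T) (u : T) : nat := #|[set v | e u v]|.

Definition connected (T : finType) (e : rel T) : Prop :=
  forall u v : T, connect e u v.

Definition absdiff (a b : nat) : nat := (a - b) + (b - a).

(* cM2(G) = sum over edges uv of |d_u^2 - d_v^2|; each unordered edge is
   counted twice in the ordered double sum, hence the halving. *)
Definition cM2 (T : finType) (e : rel T) : nat :=
  (\sum_(u : T) \sum_(v : T | e u v) absdiff (deg e u ^ 2) (deg e v ^ 2)) %/ 2.

Definition complete_rel (m : nat) : rel 'I_m := fun a b => a != b.
Definition empty_rel (m : nat) : rel 'I_m := fun _ _ => false.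

Definition join_rel (T1 T2 : finType) (e1 : rel T1) (e2 : rel T2) : rel (sum T1 T2) :=
  fun x y => match x, y with
             | inl a, inl b => e1 a b
             | inr a, inr b => e2 a b
             | _, _ => true
             end.

Definition split_graph (t n : nat) : rel (sum 'I_t 'I_(n - t)) :=
  join_rel (@complete_rel t) (@empty_rel (n - t)).

(* Let [k], [x], [y] count the vertices of degree [N = n - 1], [d1], [d2], and [M] the
   edges joining degree [d1] to degree [d2].  Vertices of degree [N] are adjacent to all
   others, so [cM2 G = k x (N^2 - d1^2) + k y (N^2 - d2^2) + (d2^2 - d1^2) M], while
   [cM2 (K_t + co-K_(n-t)) = f t := t (n - t) (N^2 - t^2)].  Counting the degrees of the
   [d1]-vertices gives [M + x k <= x d1], and trivially [M <= x y].  If [M <= k y] then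
   [cM2 G < f k]; otherwise [cM2 G < (k x + M) (N^2 - d1^2) <= f (min d1 (n - x))].
   Finally [f] increases up to [3n/10] and decreases from [4n/10] on, so some [t] in the
   window does at least as well. *)

From Stdlib Require Import ZArith Lia.
From mathcomp Require Import all_boot zify.
Set Implicit Arguments. Unset Strict Implicit. Unset Printing Implicit Defensive.

Lemma deg_sum (T : finType) (e : rel T) u : deg e u = \sum_v e u v.
Proof. by rewrite /deg -sum1dep_card big_mkcond. Qed.

Section DegreeClasses.
Variables (T : finType) (e : rel T).

Definition deg_class (d : nat) : {set T} := [set u | deg e u == d].

Definition deg_edges (d d' : nat) : nat :=
  \sum_(u in deg_class d) \sum_(v in deg_class d') e u v.

Lemma deg_edgesC d d' : symmetric e -> deg_edges d d' = deg_edges d' d.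
Proof.
move=> e_sym; rewrite /deg_edges exchange_big.
by apply: eq_bigr => v _; apply: eq_bigr => u _; rewrite e_sym.
Qed.

Lemma deg_edges_le d d' : deg_edges d d' <= #|deg_class d| * #|deg_class d'|.
Proof.
rewrite -sum_nat_const; apply: leq_sum => u _.
by rewrite -sum1_card; apply: leq_sum => v _; apply: leq_b1.
Qed.

Variable D : seq nat.
Hypotheses (D_uniq : uniq D) (deg_in_D : forall u, deg e u \in D).

Lemma sum_by_deg_class (F : T -> nat) :
  \sum_u F u = \sum_(d <- D) \sum_(u in deg_class d) F u.
Proof.
rewrite (exchange_big_dep xpredT) //=; apply: eq_bigr => u _.
rewrite -big_filter (_ : filter _ D = [:: deg e u]) ?big_seq1 //.
rewrite -(filter_pred1_uniq D_uniq (deg_in_D u)); apply: eq_filter => d.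
by rewrite inE eq_sym.
Qed.

Lemma card_by_deg_class : #|T| = \sum_(d <- D) #|deg_class d|.
Proof.
rewrite -sum1_card sum_by_deg_class; apply: eq_bigr => d _; exact: sum1_card.
Qed.

Lemma sum_deg_class d : #|deg_class d| * d = \sum_(d' <- D) deg_edges d d'.
Proof.
rewrite -sum_nat_const (eq_bigr (deg e)) => [|u]; last by rewrite inE => /eqP.
rewrite /deg_edges [RHS]exchange_big; apply: eq_bigr => u _.
by rewrite deg_sum sum_by_deg_class.
Qed.

Lemma cM2_by_deg_class :
  cM2 e = (\sum_(d <- D) \sum_(d' <- D) absdiff (d ^ 2) (d' ^ 2) * deg_edges d d') %/ 2.
Proof.
rewrite /cM2 sum_by_deg_class; congr (_ %/ 2); apply: eq_bigr => d _.
transitivity (\sum_(u in deg_class d) \sum_(d' <- D) \sum_(v in deg_class d')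
                absdiff (d ^ 2) (d' ^ 2) * e u v).
  apply: eq_bigr => u; rewrite inE => /eqP deg_u.
  rewrite big_mkcond sum_by_deg_class; apply: eq_bigr => d' _.
  apply: eq_bigr => v; rewrite inE => /eqP deg_v.
  by rewrite deg_u deg_v; case: (e u v); rewrite ?muln1 ?muln0.
rewrite exchange_big; apply: eq_bigr => d' _.
by rewrite /deg_edges big_distrr; apply: eq_bigr => u _; rewrite big_distrr.
Qed.

End DegreeClasses.

Lemma adj_of_deg_full (T : finType) (e : rel T) u v :
  simple_graph e -> deg e u = #|T|.-1 -> v != u -> e u v.
Proof.
move=> [_ e_irr] deg_u v_ne_u.
have nbrs_sub : [set w | e u w] \subset [set~ u].
  by apply/subsetP => w; rewrite !inE; apply: contraTneq => ->; rewrite e_irr.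
have : [set w | e u w] = [set~ u].
  by apply/eqP; rewrite eqEcard nbrs_sub cardsC1 -deg_u /= leqnn.
by move/setP/(_ v); rewrite !inE v_ne_u.
Qed.

Lemma deg_edges_full (T : finType) (e : rel T) d : simple_graph e -> d != #|T|.-1 ->
  deg_edges e #|T|.-1 d = #|deg_class e #|T|.-1| * #|deg_class e d|.
Proof.
move=> e_simple d_ne_N; rewrite /deg_edges -sum_nat_const.
apply: eq_bigr => u; rewrite inE => /eqP deg_u.
rewrite -sum1_card; apply: eq_bigr => v; rewrite inE => /eqP deg_v.
rewrite adj_of_deg_full //.
by apply: contra_neq d_ne_N => v_eq_u; rewrite -deg_v v_eq_u deg_u.
Qed.

Section Tridegreed.
Variables (T : finType) (e : rel T) (d1 d2 : nat).
Hypotheses (e_simple : simple_graph e) (d1_lt_d2 : d1 < d2) (d2_lt_N : d2 < #|T|.-1).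
Hypothesis deg_in : forall u, deg e u \in [:: d1; d2; #|T|.-1].
Local Notation N := #|T|.-1.
Local Notation k := #|deg_class e N|.
Local Notation x := #|deg_class e d1|.
Local Notation y := #|deg_class e d2|.
Local Notation M := (deg_edges e d1 d2).

Let degs_uniq : uniq [:: d1; d2; N].
Proof.
rewrite /= !inE (ltn_eqF d1_lt_d2) (ltn_eqF d2_lt_N).
by rewrite (ltn_eqF (ltn_trans d1_lt_d2 d2_lt_N)).
Qed.

Lemma card_tridegreed : k + x + y = #|T|.
Proof.
by rewrite [RHS](card_by_deg_class degs_uniq deg_in) !big_cons big_nil addn0; lia.
Qed.

Lemma deg_edges_tridegreed_bound : M + x * k <= x * d1.
Proof.
rewrite (sum_deg_class degs_uniq deg_in) !big_cons big_nil addn0.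
rewrite (deg_edgesC d1 N e_simple.1) deg_edges_full //; first lia.
by rewrite neq_ltn (ltn_trans d1_lt_d2).
Qed.

Lemma cM2_tridegreed :
  cM2 e = k * x * (N ^ 2 - d1 ^ 2) + k * y * (N ^ 2 - d2 ^ 2) + (d2 ^ 2 - d1 ^ 2) * M.
Proof.
have sq12 : d1 ^ 2 < d2 ^ 2 by rewrite ltn_exp2r.
have sq2N : d2 ^ 2 < N ^ 2 by rewrite ltn_exp2r.
rewrite (cM2_by_deg_class degs_uniq deg_in) !big_cons !big_nil !addn0 /absdiff !subnn.
rewrite (deg_edgesC d1 N e_simple.1) (deg_edgesC d2 N e_simple.1).
rewrite (deg_edgesC d2 d1 e_simple.1).
rewrite !add0n !mul0n !deg_edges_full ?neq_ltn ?d2_lt_N ?(ltn_trans d1_lt_d2) //.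
lia.
Qed.

End Tridegreed.

Definition split_cM2 (n t : nat) : nat := t * (n - t) * (n.-1 ^ 2 - t ^ 2).

Lemma deg_complete t (a : 'I_t) : deg (@complete_rel t) a = t.-1.
Proof.
rewrite /deg (_ : [set b | _] = [set~ a]) ?cardsC1 ?card_ord //.
by apply/setP => b; rewrite !inE eq_sym.
Qed.

Section SplitGraph.
Variables t n : nat.
Hypothesis t_le_n : t <= n.
Local Notation G := (@split_graph t n).

Lemma deg_split_graph_l a : deg G (inl a) = n.-1.
Proof.
rewrite deg_sum big_sumType /= -deg_sum deg_complete.
rewrite (eq_bigr (fun=> 1)) // sum1_card card_ord.
by have := ltn_ord a; lia.
Qed.

Lemma deg_split_graph_r c : deg G (inr c) = t.
Proof. by rewrite deg_sum big_sumType /= sum1_card card_ord big1 ?addn0. Qed.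

Lemma cM2_split_graph : cM2 G = split_cM2 n t.
Proof.
set A := absdiff (n.-1 ^ 2) (t ^ 2).
have row_l a :
    \sum_(v | G (inl a) v) absdiff (deg G (inl a) ^ 2) (deg G v ^ 2) = (n - t) * A.
  rewrite big_sumType /= big1 => [|b _]; last by rewrite !deg_split_graph_l /absdiff subnn.
  rewrite (eq_bigr (fun=> A)) => [|c _]; last by rewrite deg_split_graph_l deg_split_graph_r.
  by rewrite sum_nat_const card_ord.
have row_r c :
    \sum_(v | G (inr c) v) absdiff (deg G (inr c) ^ 2) (deg G v ^ 2) = t * A.
  rewrite big_sumType /= [X in _ + X]big1 // addn0 (eq_bigr (fun=> A)) => [|b _].
    by rewrite sum_nat_const card_ord.
  by rewrite deg_split_graph_l deg_split_graph_r /A /absdiff addnC.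
rewrite /cM2 big_sumType /= (eq_bigr _ (fun a _ => row_l a)).
rewrite (eq_bigr _ (fun c _ => row_r c)).
rewrite !sum_nat_const !card_ord mulnCA addnn -muln2 mulnK // /split_cM2 mulnA.
have [-> | t_lt_n] := eqVneq t n; first by rewrite subnn !muln0 mul0n.
rewrite [(n - t) * t]mulnC; congr (_ * _).
have : t ^ 2 <= n.-1 ^ 2 by rewrite leq_exp2r //; lia.
by rewrite /A /absdiff; lia.
Qed.

End SplitGraph.

Section TridegreedBound.
Variables n k x y d1 d2 M : nat.
Hypotheses (k_gt0 : 0 < k) (x_gt0 : 0 < x) (y_gt0 : 0 < y) (kxy_n : k + x + y = n).
Hypotheses (d1_lt_d2 : d1 < d2) (d2_lt_N : d2 < n.-1).
Hypotheses (M_le_xy : M <= x * y) (M_deg : M + x * k <= x * d1).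
Local Notation N := n.-1.
Local Notation cM2_value :=
  (k * x * (N ^ 2 - d1 ^ 2) + k * y * (N ^ 2 - d2 ^ 2) + (d2 ^ 2 - d1 ^ 2) * M).

Let sq_lt12 : d1 ^ 2 < d2 ^ 2. Proof. by rewrite ltn_exp2r. Qed.
Let sq_lt2N : d2 ^ 2 < N ^ 2. Proof. by rewrite ltn_exp2r. Qed.

Lemma cM2_value_lt_split_sparse (M_small : M <= k * y) : cM2_value < split_cM2 n k.
Proof.
have k_le_d1 : k <= d1 by rewrite -(leq_pmul2l x_gt0); lia.
rewrite /split_cM2 (_ : n - k = x + y); last by lia.
have kxy_gt0 : 0 < k * (x + y) by rewrite muln_gt0 k_gt0 addn_gt0 x_gt0.
have cM_le : (d2 ^ 2 - d1 ^ 2) * M <= (d2 ^ 2 - d1 ^ 2) * (k * y).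
  by rewrite leq_mul2l M_small orbT.
have [k_lt_d1 | k_eq_d1] : k < d1 \/ k = d1 by lia.
  have sq_lt : k ^ 2 < d1 ^ 2 by rewrite ltn_exp2r.
  have : k * (x + y) * (N ^ 2 - d1 ^ 2) < k * (x + y) * (N ^ 2 - k ^ 2).
    by rewrite ltn_pmul2l //; lia.
  lia.
have M0 : M = 0 by move: M_deg; rewrite k_eq_d1; lia.
rewrite M0 -k_eq_d1 muln0 addn0 mulnDr mulnDl ltn_add2l ltn_pmul2l ?muln_gt0 ?k_gt0 //.
lia.
Qed.

Lemma cM2_value_lt_split_dense (M_large : k * y < M) :
  cM2_value < split_cM2 n (minn d1 (n - x)).
Proof.
set s := minn d1 (n - x).
have s_le_d1 : s <= d1 := geq_minl _ _.
have s_le : s <= n - x := geq_minr _ _.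
have kxM_le : k * x + M <= x * s.
  have [-> | ->] : s = d1 \/ s = n - x by rewrite /s; lia.
    by lia.
  by rewrite (_ : n - x = k + y) ?mulnDr; lia.
have sq_le : s ^ 2 <= d1 ^ 2 by rewrite leq_exp2r.
have : (k * x + M) * (N ^ 2 - d1 ^ 2) <= x * s * (N ^ 2 - s ^ 2) by apply: leq_mul; lia.
have : x * s * (N ^ 2 - s ^ 2) <= split_cM2 n s.
  by rewrite /split_cM2 [x * s]mulnC; apply: leq_mul => //; apply: leq_mul; lia.
have : k * y * (N ^ 2 - d2 ^ 2) < M * (N ^ 2 - d2 ^ 2) by rewrite ltn_pmul2r //; lia.
lia.
Qed.

Lemma cM2_value_lt_split : exists2 s, s <= n & cM2_value < split_cM2 n s.
Proof.
have [M_small | M_large] := leqP M (k * y).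
  by exists k; [lia | apply: cM2_value_lt_split_sparse].
by exists (minn d1 (n - x)); [lia | apply: cM2_value_lt_split_dense].
Qed.

End TridegreedBound.

Definition split_polyZ (n t : Z) : Z := (t * (n - t) * ((n - 1) * (n - 1) - t * t))%Z.

Lemma split_cM2_Z n t : t <= n ->
  Z.of_nat (split_cM2 n t) = split_polyZ (Z.of_nat n) (Z.of_nat t).
Proof.
rewrite /split_cM2 /split_polyZ leq_eqVlt => /orP[/eqP -> | lt_tn].
  by rewrite subnn muln0 mul0n Z.sub_diag Z.mul_0_r.
have sq_le : t * t <= n.-1 * n.-1 by apply: leq_mul; lia.
rewrite !expnS !expn0 !muln1 !Nat2Z.inj_mul !Nat2Z.inj_sub ?Nat2Z.inj_mul;
  try by apply/leP; lia.
by have -> : Z.of_nat n.-1 = (Z.of_nat n - 1)%Z by lia.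
Qed.

Lemma split_polyZ_step_up n s : (11 <= n -> 0 <= s -> 10 * s < 3 * n ->
  split_polyZ n s <= split_polyZ n (s + 1))%Z.
Proof. by rewrite /split_polyZ; nia. Qed.

Lemma split_polyZ_step_down n s :
  (11 <= n -> 0 <= s -> s + 1 <= n -> 4 * n <= 10 * s + 8 ->
   split_polyZ n (s + 1) <= split_polyZ n s)%Z.
Proof.
move=> n_ge11 s_ge0 s_lt_n s_large.
have [u def_u] : exists u, u = (10 * s + 8 - 4 * n)%Z by eexists.
have [w def_w] : exists w, w = (n - 11)%Z by eexists.
have bracket_ge0 : (0 <= 4 * u * u + 42 * u * w + 418 * u + 4 * (w + 9) * (w - 1))%Z.
  (* [u = 0] would mean [10 s + 8 = 4 n], which is impossible for [n = 11] *)
  have [u0 | u_pos] : (u = 0 \/ 1 <= u)%Z by lia.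
    have w_pos : (1 <= w)%Z by lia.
    by rewrite u0; nia.
  by nia.
have drop : (100 * (split_polyZ n s - split_polyZ n (s + 1)) =
    (n - s - 1) * (4 * u * u + 42 * u * w + 418 * u + 4 * (w + 9) * (w - 1)))%Z.
  by rewrite def_u def_w /split_polyZ; ring.
by have := Z.mul_nonneg_nonneg (n - s - 1) _ ltac:(lia) bracket_ge0; lia.
Qed.

Lemma split_cM2_step_up n s : 11 <= n -> 10 * s < 3 * n ->
  split_cM2 n s <= split_cM2 n s.+1.
Proof.
move=> n_ge11 s_small; apply/leP/Nat2Z.inj_le.
rewrite !split_cM2_Z ?Nat2Z.inj_succ -?Z.add_1_r; try lia.
by apply: split_polyZ_step_up; lia.
Qed.

Lemma split_cM2_step_down n s : 11 <= n -> 4 * n <= 10 * s + 8 -> s < n ->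
  split_cM2 n s.+1 <= split_cM2 n s.
Proof.
move=> n_ge11 s_large s_lt_n; apply/leP/Nat2Z.inj_le.
rewrite !split_cM2_Z ?Nat2Z.inj_succ -?Z.add_1_r; try lia.
by apply: split_polyZ_step_down; lia.
Qed.

Lemma split_cM2_window n s : 11 <= n -> s <= n ->
  exists2 t, 3 * n <= 10 * t <= 4 * n & split_cM2 n s <= split_cM2 n t.
Proof.
move=> n_ge11 s_le_n.
have [s_small | s_ge] := ltnP (10 * s) (3 * n).
  exists ((3 * n + 9) %/ 10); first lia.
  pose D := [pred i | 10 * i <= 3 * n + 9].
  apply: (@homo_leq_in _ D (split_cM2 n) leq leqnn leq_trans); rewrite ?inE; try lia.
    by move=> i j iD jD k; rewrite !inE in iD jD *; lia.
  by move=> i; rewrite !inE => _ i_small; apply: split_cM2_step_up; lia.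
have [s_le | s_large] := leqP (10 * s) (4 * n); first by exists s => //; lia.
exists (4 * n %/ 10); first lia.
pose D := [pred i | 4 * n <= 10 * i + 9 <= 10 * n + 9].
apply: (@homo_leq_in _ D (split_cM2 n) (fun a b => b <= a) leqnn
          (fun _ _ _ xy yz => leq_trans yz xy)); rewrite ?inE; try lia.
  by move=> i j iD jD k; rewrite !inE in iD jD *; lia.
by move=> i; rewrite !inE => i_large i_lt; apply: split_cM2_step_down; lia.
Qed.

Theorem proposition5 (n : nat) (T : finType) (e : rel T) (d1 d2 d3 : nat) :
  11 <= n -> #|T| = n -> simple_graph e -> connected e ->
  (forall d, (exists u : T, deg e u = d) <-> d \in [:: d1; d2; d3]) ->
  d1 < d2 -> d2 < d3 -> d3 = n.-1 ->
  exists t : nat, 3 * n <= 10 * t <= 4 * n /\ cM2 e < cM2 (@split_graph t n).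
Proof.
move=> n_ge11 card_T e_simple _ degs d1_lt_d2 d2_lt_d3 d3_eq.
rewrite d3_eq -card_T in degs d2_lt_d3.
have deg_in u : deg e u \in [:: d1; d2; #|T|.-1] by apply/degs; exists u.
have class_gt0 d : d \in [:: d1; d2; #|T|.-1] -> 0 < #|deg_class e d|.
  by move=> /degs[u deg_u]; apply/card_gt0P; exists u; rewrite inE deg_u.
have [s s_le_n cM2_lt] : exists2 s, s <= n & cM2 e < split_cM2 n s.
  rewrite (cM2_tridegreed e_simple d1_lt_d2 d2_lt_d3 deg_in) -card_T.
  apply: cM2_value_lt_split; rewrite ?class_gt0 ?inE ?eqxx ?orbT //.
  - exact: card_tridegreed.
  - exact: deg_edges_le.
  - exact: deg_edges_tridegreed_bound.
have [t t_window split_le] := split_cM2_window n_ge11 s_le_n.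
exists t; split => //.
by rewrite cM2_split_graph; [apply: leq_trans split_le | lia].
Qed.
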